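(* For any $x\in(H^\ast)^{\otimes n}$ and $v\in H^{\otimes n}$, $[\mathcal{B}_n(x)](v)=x(\mathcal{B}_n(v))$.
   Context: $G$ finite group, $H$ a finite dimensional $G$-graded $G$-module, $H^\ast$ its dual with $(\gamma\cdot x)(v)=x(\gamma^{-1}\cdot v)$ and $(H^\ast)_m=(H_{m^{-1}})^\ast$; $B_n$ acts on $H^{\otimes n}$ and $(H^\ast)^{\otimes n}$ via the braiding $v\otimes w\mapsto(g\cdot w)\otimes v$ for $v$ of degree $g$. The pairing is $(x_1\otimes\cdots\otimes x_n)(v_1\otimes\cdots\otimes v_n)=x_n(v_1)\cdots x_1(v_n)$. $\mathcal{B}_n$ is the $n$th braidization (on $H^{\otimes n}$ and on $(H^\ast)^{\otimes n}$): for $\boldsymbol\gamma\in G^n$ and $v$ in $H_{\gamma_1}\otimes\cdots\otimes H_{\gamma_n}$, $\mathcal{B}_n(v)=\frac{1}{|A_{\boldsymbol\gamma}|}\sum_{b_{\boldsymbol\gamma}\in A_{\boldsymbol\gamma}}b_{\boldsymbol\gamma}\cdot v$, where $A_{\boldsymbol\gamma}$ is the set of distinct transformations $b_{\boldsymbol\gamma}\in G^n\rtimes S_n$ induced by braids $b\in B_n$ acting on $\boldsymbol\gamma$ (under $b_i(\gamma_1,\dots,\gamma_n)=(\dots,\gamma_i\gamma_{i+1}\gamma_i^{-1},\gamma_i,\dots)$), i.e. morphisms with source $\boldsymbol\gamma$ in the groupoid $\mathcal G^n$. *)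

From HB Require Import structures.
From mathcomp Require Import all_boot all_order all_algebra all_fingroup.
From mathcomp Require Import boolp.
Set Implicit Arguments. Unset Strict Implicit. Unset Printing Implicit Defensive.
Import GRing.Theory.
Local Open Scope ring_scope.

(* H has a homogeneous basis e_0,...,e_{d-1}; basis vector
   e_k has degree [deg k] in G, and gamma acts by the matrix [rho gamma]
   (column convention: gamma . e_k = \sum_l rho gamma l k e_l).
   A tensor in H^{(x)n} is given by its coordinates on the basis
   e_{f 0} (x) ... (x) e_{f (n-1)}, f : {ffun 'I_n -> 'I_d}. *)

Section Braidization.
Variables (gT : finGroupType) (n : nat).

(* a degree sequence (object of the groupoid G^n) *)
Definition degseq := {ffun 'I_n -> gT}.

(* An element (p, c) of G^n x| S_n: it sends v_0 (x) ... (x) v_{n-1}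
   to the tensor whose j-th factor is  c_j . v_{p j}. *)
Definition gpd := ({perm 'I_n} * {ffun 'I_n -> gT})%type.

Definition gpd_id : gpd := (1%g, [ffun => 1%g]).

Definition gpd_tgt (g : degseq) (t : gpd) : degseq :=
  [ffun j => (t.2 j * g (t.1 j) * (t.2 j)^-1)%g].

(* post-compose with the braid generator b_i (l = (i, true)) or its inverse
   (l = (i, false)), where b_i : v (x) w |-> (deg v . w) (x) v on factors i,i+1.
   Letters with i+1 >= n act trivially. *)
Definition gpd_step (g : degseq) (t : gpd) (l : 'I_n * bool) : gpd :=
  let i := l.1 in
  if (i.+1 < n)%N then
    let i1 : 'I_n := insubd i i.+1 in
    let de := gpd_tgt g t in
    let c := t.2 in
    ((tperm i i1 * t.1)%g,
     if l.2 then
       [ffun j => if j == i then (de i * c i1)%g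
                  else if j == i1 then c i else c j]
     else
       [ffun j => if j == i then c i1
                  else if j == i1 then ((de i1)^-1 * c i)%g else c j])
  else t.

Definition induced (g : degseq) (w : seq ('I_n * bool)) : gpd :=
  foldl (gpd_step g) gpd_id w.

Definition Aset (g : degseq) : {set gpd} :=
  [set t | `[< exists w, induced g w = t >] ].

Variable F : fieldType.

Definition idx (d : nat) := {ffun 'I_n -> 'I_d}.

Definition degs d (deg : 'I_d -> gT) (f : idx d) : degseq :=
  [ffun j => deg (f j)].

Definition gpd_act d (rho : gT -> 'M[F]_d) (t : gpd) (V : idx d -> F)
  : idx d -> F :=
  fun h => \sum_(f : idx d) V f * \prod_(j : 'I_n) rho (t.2 j) (h j) (f (t.1 j)).

Definition hproj d (deg : 'I_d -> gT) (g : degseq) (V : idx d -> F)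
  : idx d -> F :=
  fun f => if degs deg f == g then V f else 0.

Definition braidize d (deg : 'I_d -> gT) (rho : gT -> 'M[F]_d)
  (V : idx d -> F) : idx d -> F :=
  fun h => \sum_(g : degseq)
     (#|Aset g|%:R)^-1 * \sum_(t in Aset g) gpd_act rho t (hproj deg g V) h.

(* dual module H-dual in the dual basis e^k: (H-dual)_m = dual of H_{m^-1}, so e^k has
   degree (deg k)^-1; (gamma . x)(v) = x(gamma^-1 . v) gives the matrix
   (rho gamma^-1)^T. *)
Definition dual_deg d (deg : 'I_d -> gT) : 'I_d -> gT := fun k => ((deg k)^-1)%g.
Definition dual_rho d (rho : gT -> 'M[F]_d) : gT -> 'M[F]_d :=
  fun g => (rho (g^-1)%g)^T.

(* (x_1 (x) ... (x) x_n)(v_1 (x) ... (x) v_n) = x_n(v_1) ... x_1(v_n) *)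
Definition pairing d (X V : idx d -> F) : F :=
  \sum_(f : idx d) X [ffun j => f (rev_ord j)] * V f.

End Braidization.

From HB Require Import structures.
From mathcomp Require Import all_boot all_order all_algebra all_fingroup.
From mathcomp Require Import boolp zify.
Import GRing.Theory.

Set Implicit Arguments. Unset Strict Implicit. Unset Printing Implicit Defensive.

(* The transformations of G^n x| S_n form a groupoid over the degree sequences,
   and A_gamma is the set of arrows out of gamma in the subgroupoid generated
   by the braid generators; so A_gamma and A_delta have the same size whenever
   an arrow joins gamma to delta.  With respect to the reversing pairing, the
   transpose of the action of t on the dual is the action on H of the mirror
   image of t^-1 (the braid read backwards on reversed tensors).  Hence
   (gamma, t) |-> (reversed target of t, mirror of t^-1) is an involution of
   the set of pairs (gamma, t) with t in A_gamma which preserves the weights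
   1/|A_gamma| and exchanges the two sides of the identity; gradedness of the
   action is what lets the homogeneous projections follow along. *)

Section Groupoid.
Variables (gT : finGroupType) (n : nat).
Local Notation gpd := (gpd gT n).
Local Notation degseq := (degseq gT n).
Local Notation letter := ('I_n * bool)%type.
Local Open Scope group_scope.

Definition gpd_comp (s t : gpd) : gpd :=
  (s.1 * t.1, [ffun j => s.2 j * t.2 (s.1 j)]).
Definition gpd_inv (t : gpd) : gpd :=
  (t.1^-1, [ffun j => (t.2 (t.1^-1 j))^-1]).

Definition rev_perm : {perm 'I_n} := perm (@rev_ord_inj n).
Definition gpd_rev (t : gpd) : gpd :=
  (rev_perm * t.1 * rev_perm, [ffun k => t.2 (rev_ord k)]).
(* degrees paired with g by the reversing pairing; dual degrees are inverted *)
Definition degseq_rev (g : degseq) : degseq := [ffun k => (g (rev_ord k))^-1].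

Definition gpd_gen (h : degseq) (l : letter) : gpd := gpd_step h (gpd_id gT n) l.
Definition letter_inv (l : letter) : letter := (l.1, ~~ l.2).
(* b_i on reversed tensors is b_{n-2-i}^-1 *)
Definition letter_rev (l : letter) : letter :=
  (if (l.1.+1 < n)%N then insubd l.1 (n - l.1.+2) else l.1, ~~ l.2).

Lemma gpdP (s t : gpd) : s.1 = t.1 -> (forall j, s.2 j = t.2 j) -> s = t.
Proof. by case: s t => [p c] [q e] /= -> /ffunP ->. Qed.

Lemma gpd_compA : associative gpd_comp.
Proof. by move=> a b c; apply: gpdP => [|j]; rewrite /= ?mulgA // !ffunE permM mulgA. Qed.

Lemma gpd_comp1t : left_id (gpd_id gT n) gpd_comp.
Proof. by move=> t; apply: gpdP => [|j]; rewrite /= ?mul1g // !ffunE perm1 mul1g. Qed.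

Lemma gpd_compt1 : right_id (gpd_id gT n) gpd_comp.
Proof. by move=> t; apply: gpdP => [|j]; rewrite /= ?mulg1 // !ffunE mulg1. Qed.

Lemma gpd_compVt t : gpd_comp (gpd_inv t) t = gpd_id gT n.
Proof. by apply: gpdP => [|j]; rewrite /= ?mulVg // !ffunE mulVg. Qed.

Lemma gpd_comptV t : gpd_comp t (gpd_inv t) = gpd_id gT n.
Proof. by apply: gpdP => [|j]; rewrite /= ?mulgV // !ffunE permK mulgV. Qed.

Lemma gpd_inv_uniq a b : gpd_comp a b = gpd_id gT n -> a = gpd_inv b.
Proof. by move=> h; rewrite -[a]gpd_compt1 -(gpd_comptV b) gpd_compA h gpd_comp1t. Qed.

Lemma gpd_invK : involutive gpd_inv.
Proof. by move=> t; symmetry; apply: gpd_inv_uniq; rewrite gpd_comptV. Qed.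

Lemma gpd_invM s t : gpd_inv (gpd_comp s t) = gpd_comp (gpd_inv t) (gpd_inv s).
Proof.
symmetry; apply: gpd_inv_uniq.
by rewrite -gpd_compA [gpd_comp (gpd_inv s) _]gpd_compA gpd_compVt gpd_comp1t gpd_compVt.
Qed.

Lemma gpd_comp_injl t : injective (gpd_comp^~ t).
Proof.
move=> a b /= h.
by rewrite -[a]gpd_compt1 -(gpd_comptV t) gpd_compA h -gpd_compA gpd_comptV gpd_compt1.
Qed.

Lemma rev_permE k : rev_perm k = rev_ord k.
Proof. by rewrite permE. Qed.

Lemma gpd_revK : involutive gpd_rev.
Proof.
move=> t; apply: gpdP => [|j]; last by rewrite /= !ffunE rev_ordK.
by apply/permP => k; rewrite /= !permM !rev_permE !rev_ordK.
Qed.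

Lemma gpd_rev_inj : injective gpd_rev.
Proof. exact: inv_inj gpd_revK. Qed.

Lemma gpd_revM s t : gpd_rev (gpd_comp s t) = gpd_comp (gpd_rev s) (gpd_rev t).
Proof.
apply: gpdP => [|j] /=; first by apply/permP => k; rewrite !permM !rev_permE rev_ordK.
by rewrite !ffunE !permM !rev_permE rev_ordK.
Qed.

Lemma gpd_rev_id : gpd_rev (gpd_id gT n) = gpd_id gT n.
Proof.
apply: gpdP => [|j] /=; last by rewrite !ffunE.
by apply/permP => k; rewrite !permM !rev_permE perm1 rev_ordK perm1.
Qed.

Lemma gpd_revV t : gpd_rev (gpd_inv t) = gpd_inv (gpd_rev t).
Proof. by apply: gpd_inv_uniq; rewrite -gpd_revM gpd_compVt gpd_rev_id. Qed.

Lemma degseq_revK : involutive degseq_rev.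
Proof. by move=> g; apply/ffunP => k; rewrite !ffunE rev_ordK invgK. Qed.

Lemma gpd_tgt_id (g : degseq) : gpd_tgt g (gpd_id gT n) = g.
Proof. by apply/ffunP => j; rewrite !ffunE perm1 mul1g invg1 mulg1. Qed.

Lemma gpd_tgtM (g : degseq) s t : gpd_tgt g (gpd_comp s t) = gpd_tgt (gpd_tgt g t) s.
Proof. by apply/ffunP => j; rewrite !ffunE permM invMg !mulgA. Qed.

Lemma gpd_tgt_rev (h : degseq) u : gpd_tgt (degseq_rev h) (gpd_rev u) = degseq_rev (gpd_tgt h u).
Proof. by apply/ffunP => k; rewrite !ffunE !permM !rev_permE rev_ordK !invMg invgK !mulgA. Qed.


Lemma rev_permV : rev_perm^-1 = rev_perm.
Proof.
by apply: (mulgI rev_perm); apply/permP => k; rewrite mulgV permM !rev_permE rev_ordK perm1.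
Qed.

Lemma rev_perm_tpermJ (a b : 'I_n) :
  rev_perm * tperm a b * rev_perm = tperm (rev_ord a) (rev_ord b).
Proof. by rewrite -{1}rev_permV -mulgA -conjgE tpermJ !rev_permE. Qed.

Lemma gpd_step_comp (g : degseq) t l : gpd_step g t l = gpd_comp (gpd_gen (gpd_tgt g t) l) t.
Proof.
rewrite /gpd_gen /gpd_step; case: ifP => hi; last by rewrite gpd_comp1t.
apply: gpdP => [|j] /=; first by rewrite mulg1.
rewrite gpd_tgt_id; move: hi; case: l => i b /= hi.
set i1 := insubd i i.+1.
have ne : i != i1 by rewrite -val_eqE /i1 val_insubd hi ltn_eqF.
rewrite !ffunE permM perm1.
case: (eqVneq j i) => [->|nji].
  by case: b; rewrite !ffunE eqxx tpermL ?mulg1 ?mul1g.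
case: (eqVneq j i1) => [->|nji1].
  by case: b; rewrite !ffunE eqxx eq_sym (negbTE ne) ?tpermR ?mul1g ?mulg1.
by rewrite tpermD 1?eq_sym //; case: b; rewrite !ffunE (negbTE nji) (negbTE nji1) mul1g.
Qed.

Lemma induced_rcons (g : degseq) w l : induced g (rcons w l) = gpd_step g (induced g w) l.
Proof. by rewrite /induced foldl_rcons. Qed.

Lemma induced_cat (g : degseq) w1 w2 :
  induced g (w1 ++ w2)
  = gpd_comp (induced (gpd_tgt g (induced g w1)) w2) (induced g w1).
Proof.
elim/last_ind: w2 => [|w2 l IH]; first by rewrite cats0 gpd_comp1t.
by rewrite -rcons_cat !induced_rcons IH !gpd_step_comp -gpd_compA gpd_tgtM.
Qed.

Lemma gpd_gen_out (h : degseq) (l : letter) : ~~ (l.1.+1 < n)%N -> gpd_gen h l = gpd_id gT n.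
Proof. by rewrite /gpd_gen /gpd_step => /negbTE ->. Qed.

Section Generator.
Variables (i : 'I_n) (lt_i1n : (i.+1 < n)%N).
Let i1 : 'I_n := insubd i i.+1.

Lemma val_succ_ord : val i1 = i.+1.
Proof. by rewrite /i1 val_insubd lt_i1n. Qed.

Lemma succ_ord_neq : (i == i1) = false.
Proof. by rewrite -val_eqE val_succ_ord ltn_eqF. Qed.

Lemma gpd_gen_pos (h : degseq) :
  gpd_gen h (i, true) = (tperm i i1, [ffun j => if j == i then h i else 1]).
Proof.
rewrite /gpd_gen /gpd_step /= lt_i1n gpd_tgt_id.
apply: gpdP => [|j] /=; first by rewrite mulg1.
by rewrite !ffunE; case: eqP => _; rewrite ?mulg1 //; case: eqP.
Qed.

Lemma gpd_gen_neg (h : degseq) :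
  gpd_gen h (i, false) = (tperm i i1, [ffun j => if j == i1 then (h i1)^-1 else 1]).
Proof.
rewrite /gpd_gen /gpd_step /= lt_i1n gpd_tgt_id.
apply: gpdP => [|j] /=; first by rewrite mulg1.
rewrite !ffunE; case: (eqVneq j i) => [->|_]; first by rewrite succ_ord_neq.
by case: eqP => _; rewrite ?mulg1.
Qed.

End Generator.

Lemma gpd_gen_inv (h : degseq) l :
  gpd_comp (gpd_gen (gpd_tgt h (gpd_gen h l)) (letter_inv l)) (gpd_gen h l) = gpd_id gT n.
Proof.
case: l => i b; rewrite /letter_inv /=.
have [hi|hi] := boolP (i.+1 < n)%N; last by rewrite !gpd_gen_out // gpd_comp1t.
have ne := succ_ord_neq hi; have ne' : (insubd i i.+1 == i) = false by rewrite eq_sym.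
case: b => /=; rewrite ?gpd_gen_pos ?gpd_gen_neg //;
  apply: gpdP => [|j] /=; rewrite ?tperm2 // !ffunE.
- case: (eqVneq j i) => [->|nji]; first by rewrite ne tpermL ne' mul1g.
  case: (eqVneq j (insubd i i.+1)) => [->|nji1].
    by rewrite ne' /= tpermR eqxx mul1g invg1 mulg1 mulVg.
  by rewrite tpermD ?(negbTE nji) ?mul1g // eq_sym.
- case: (eqVneq j i) => [->|nji].
    by rewrite ne /= tpermL eqxx mul1g invg1 mulg1 mulgV.
  rewrite mul1g; case: (eqVneq j (insubd i i.+1)) => [->|nji1]; first by rewrite tpermR ne.
  by rewrite tpermD ?(negbTE nji1) // eq_sym.
Qed.

Lemma rev_ord_eq (k i : 'I_n) : (rev_ord k == i) = (k == rev_ord i).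
Proof. by rewrite -{1}(rev_ordK i) (inj_eq rev_ord_inj). Qed.

Lemma gpd_gen_rev (h : degseq) l : gpd_rev (gpd_gen h l) = gpd_gen (degseq_rev h) (letter_rev l).
Proof.
case: l => i b; rewrite /letter_rev /=.
have [hi|hi] := boolP (i.+1 < n)%N; last by rewrite !gpd_gen_out ?gpd_rev_id ?(negbTE hi).
set i1 := insubd i i.+1; set m := insubd i (n - i.+2).
have val_m : val m = (n - i.+2)%N by rewrite /m val_insubd; apply/ifT; lia.
have hm : (m.+1 < n)%N by rewrite val_m; lia.
set m1 := insubd m m.+1.
have rev_i : rev_ord i = m1 by apply: val_inj; rewrite /= val_succ_ord // val_m; lia.
have rev_i1 : rev_ord i1 = m by apply: val_inj; rewrite /= val_succ_ord // val_m; lia.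
have hp : rev_perm * tperm i i1 * rev_perm = tperm m m1.
  by rewrite rev_perm_tpermJ rev_i rev_i1 tpermC.
case: b => /=; rewrite ?gpd_gen_pos ?gpd_gen_neg //; apply: gpdP => [|k] //=.
- by rewrite !ffunE rev_ord_eq rev_i -/m1 -rev_i rev_ordK invgK.
- by rewrite !ffunE -/i1 rev_ord_eq rev_i1 -rev_i1 rev_ordK.
Qed.

Lemma induced_rev (g : degseq) w :
  induced (degseq_rev g) (map letter_rev w) = gpd_rev (induced g w).
Proof.
elim/last_ind: w => [|w l IH]; first by rewrite /= gpd_rev_id.
by rewrite map_rcons !induced_rcons !gpd_step_comp IH gpd_revM gpd_gen_rev gpd_tgt_rev.
Qed.

Lemma induced_inv (g : degseq) w :
  exists w', induced (gpd_tgt g (induced g w)) w' = gpd_inv (induced g w).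
Proof.
elim/last_ind: w => [|w l [w' IH]].
  by exists [::]; rewrite /= gpd_tgt_id; apply: gpd_inv_uniq; rewrite gpd_comp1t.
set t := induced g w; set e := gpd_gen (gpd_tgt g t) l.
have -> : induced g (rcons w l) = gpd_comp e t by rewrite induced_rcons gpd_step_comp.
exists (letter_inv l :: w'); rewrite -cat1s induced_cat.
have -> : induced (gpd_tgt g (gpd_comp e t)) [:: letter_inv l] = gpd_inv e.
  by apply: gpd_inv_uniq; rewrite gpd_tgtM; exact: gpd_gen_inv.
by rewrite -gpd_tgtM gpd_compA gpd_compVt gpd_comp1t IH gpd_invM.
Qed.


Lemma AsetP (g : degseq) t : reflect (exists w, induced g w = t) (t \in Aset g).
Proof. by rewrite inE; exact: asboolP. Qed.

Lemma Aset_comp (g : degseq) t u :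
  t \in Aset g -> u \in Aset (gpd_tgt g t) -> gpd_comp u t \in Aset g.
Proof.
by move=> /AsetP [w <-] /AsetP [w' <-]; apply/AsetP; exists (w ++ w'); rewrite induced_cat.
Qed.

Lemma Aset_inv (g : degseq) t : t \in Aset g -> gpd_inv t \in Aset (gpd_tgt g t).
Proof. by move=> /AsetP [w <-]; have [w' ?] := induced_inv g w; apply/AsetP; exists w'. Qed.

Lemma Aset_rev (g : degseq) t : t \in Aset g -> gpd_rev t \in Aset (degseq_rev g).
Proof. by move=> /AsetP [w <-]; apply/AsetP; exists (map letter_rev w); rewrite induced_rev. Qed.

Lemma card_Aset_tgt_le (g : degseq) t :
  t \in Aset g -> #|Aset (gpd_tgt g t)| <= #|Aset g|.
Proof.
move=> tA; rewrite -(card_imset _ (@gpd_comp_injl t)); apply: subset_leq_card.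
by apply/subsetP => _ /imsetP [u uA ->]; exact: Aset_comp.
Qed.

Lemma card_Aset_tgt (g : degseq) t : t \in Aset g -> #|Aset (gpd_tgt g t)| = #|Aset g|.
Proof.
move=> tA; apply/eqP; rewrite eqn_leq card_Aset_tgt_le //=.
by have := card_Aset_tgt_le (Aset_inv tA); rewrite -gpd_tgtM gpd_compVt gpd_tgt_id.
Qed.

Lemma card_Aset_rev_le (g : degseq) : #|Aset g| <= #|Aset (degseq_rev g)|.
Proof.
rewrite -(card_imset _ gpd_rev_inj); apply: subset_leq_card.
by apply/subsetP => _ /imsetP [u uA ->]; exact: Aset_rev.
Qed.

Lemma card_Aset_rev (g : degseq) : #|Aset (degseq_rev g)| = #|Aset g|.
Proof.
apply/eqP; rewrite eqn_leq card_Aset_rev_le andbT.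
by have := card_Aset_rev_le (degseq_rev g); rewrite degseq_revK.
Qed.

Definition gpd_adj (t : gpd) : gpd := gpd_rev (gpd_inv t).

Definition adj_pair (x : degseq * gpd) : degseq * gpd :=
  (degseq_rev (gpd_tgt x.1 x.2), gpd_adj x.2).

Lemma gpd_tgt_adj (g : degseq) t :
  gpd_tgt (degseq_rev (gpd_tgt g t)) (gpd_adj t) = degseq_rev g.
Proof. by rewrite gpd_tgt_rev -gpd_tgtM gpd_compVt gpd_tgt_id. Qed.

Lemma adj_pairK : involutive adj_pair.
Proof.
by case=> g t; rewrite /adj_pair /= gpd_tgt_adj degseq_revK /gpd_adj gpd_revV gpd_revK gpd_invK.
Qed.

Lemma Aset_adj_pair x : x.2 \in Aset x.1 -> (adj_pair x).2 \in Aset (adj_pair x).1.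
Proof. by case: x => g t /= /Aset_inv/Aset_rev. Qed.

Lemma card_Aset_adj_pair x : x.2 \in Aset x.1 -> #|Aset (adj_pair x).1| = #|Aset x.1|.
Proof. by case: x => g t /= tA; rewrite card_Aset_rev card_Aset_tgt. Qed.

End Groupoid.

Local Open Scope ring_scope.

Lemma sum_Aset_adj_pair (gT : finGroupType) (n : nat) (R : nmodType)
    (W : nat -> degseq gT n * gpd gT n -> R) :
  \sum_(g : degseq gT n) \sum_(t in Aset g) W #|Aset g| (adj_pair (g, t))
  = \sum_(g : degseq gT n) \sum_(t in Aset g) W #|Aset g| (g, t).
Proof.
rewrite (pair_big_dep xpredT (fun g t => t \in Aset g)
           (fun g t => W #|Aset g| (adj_pair (g, t)))).
rewrite (pair_big_dep xpredT (fun g t => t \in Aset g) (fun g t => W #|Aset g| (g, t))).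
rewrite [RHS](reindex_inj (inv_inj (@adj_pairK gT n))).
apply: eq_big => x; rewrite !andTb.
  apply/idP/idP => xA; first exact: (Aset_adj_pair xA).
  by have := Aset_adj_pair xA; rewrite (adj_pairK x).
by move=> xA; rewrite -!surjective_pairing (card_Aset_adj_pair xA).
Qed.

Section Pairing.
Variables (gT : finGroupType) (n : nat) (F : fieldType) (d : nat).
Implicit Types (deg : 'I_d -> gT) (rho : gT -> 'M[F]_d) (X Y V : idx n d -> F).

Definition idx_rev (f : idx n d) : idx n d := [ffun j => f (rev_ord j)].

Lemma idx_revK : involutive idx_rev.
Proof. by move=> f; apply/ffunP => j; rewrite !ffunE rev_ordK. Qed.

Lemma pairing_eq X X' V V' : X =1 X' -> V =1 V' -> pairing X V = pairing X' V'.
Proof. by move=> eqX eqV; apply: eq_bigr => f _; rewrite eqX eqV. Qed.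

Lemma pairing_suml (I : finType) (P : pred I) (B : I -> idx n d -> F) V :
  pairing (fun h => \sum_(i | P i) B i h) V = \sum_(i | P i) pairing (B i) V.
Proof.
by rewrite /pairing; under eq_bigr do rewrite mulr_suml; exact: exchange_big.
Qed.

Lemma pairing_sumr (I : finType) (P : pred I) (B : I -> idx n d -> F) X :
  pairing X (fun h => \sum_(i | P i) B i h) = \sum_(i | P i) pairing X (B i).
Proof.
by rewrite /pairing; under eq_bigr do rewrite mulr_sumr; exact: exchange_big.
Qed.

Lemma pairing_scalel (a : F) X V : pairing (fun h => a * X h) V = a * pairing X V.
Proof. by rewrite /pairing mulr_sumr; apply: eq_bigr => f _; rewrite mulrA. Qed.

Lemma pairing_scaler (a : F) X V : pairing X (fun h => a * V h) = a * pairing X V.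
Proof. by rewrite /pairing mulr_sumr; apply: eq_bigr => f _; rewrite mulrCA. Qed.

Lemma pairing_gpd_act rho (t : gpd gT n) Y V :
  pairing (gpd_act (dual_rho rho) t Y) V = pairing Y (gpd_act rho (gpd_adj t) V).
Proof.
rewrite /pairing [RHS](reindex_inj (inv_inj idx_revK)) /gpd_act.
under [RHS]eq_bigr => f _ do rewrite -/(idx_rev (idx_rev f)) idx_revK big_distrr.
under [LHS]eq_bigr => f _ do rewrite mulr_suml.
rewrite exchange_big /=; apply: eq_bigr => f' _; apply: eq_bigr => f _.
rewrite -mulrA [_ * V f]mulrC; congr (_ * (_ * _)).
rewrite (reindex_inj (h := fun k => (t.1^-1)%g (rev_ord k))); last first.
  by move=> a b /= /perm_inj /rev_ord_inj.
apply: eq_bigr => k _.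
by rewrite /dual_rho mxE /gpd_adj /gpd_rev /gpd_inv /= permKV !ffunE !permM !rev_permE.
Qed.

Lemma degs_dual_rev deg f :
  degs (dual_deg deg) (idx_rev f) = degseq_rev (degs deg f).
Proof. by apply/ffunP => j; rewrite !ffunE. Qed.

Lemma pairing_hproj deg (g : degseq gT n) Y V :
  pairing (hproj (dual_deg deg) g Y) V = pairing Y (hproj deg (degseq_rev g) V).
Proof.
apply: eq_bigr => f _; rewrite /hproj -/(idx_rev f) degs_dual_rev.
have -> : (degseq_rev (degs deg f) == g) = (degs deg f == degseq_rev g).
  by apply/eqP/eqP => [<-|->]; rewrite degseq_revK.
by case: ifP; rewrite ?mul0r ?mulr0.
Qed.

Definition graded deg rho :=
  forall (g : gT) (k l : 'I_d), rho g l k != 0 -> deg l = (g * deg k * g^-1)%g.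

Lemma dual_graded deg rho : graded deg rho -> graded (dual_deg deg) (dual_rho rho).
Proof.
move=> grd g k l; rewrite /dual_rho mxE => /grd deg_k.
by rewrite /dual_deg deg_k !invMg !invgK !mulgA mulgV mul1g mulgK.
Qed.

Lemma hproj_gpd_act deg rho (t : gpd gT n) (g : degseq gT n) V :
  graded deg rho ->
  hproj deg (gpd_tgt g t) (gpd_act rho t (hproj deg g V)) =1
  gpd_act rho t (hproj deg g V).
Proof.
move=> grd h; rewrite {1}/hproj; case: eqP => // tgt_h.
symmetry; apply: big1 => f _; rewrite /hproj.
case: eqP => [deg_f|_]; last by rewrite mul0r.
apply/eqP; rewrite mulf_eq0 orbC; apply/orP; left.
apply/negPn/negP => /prodf_neq0 nz; apply: tgt_h.
by apply/ffunP => j; rewrite !ffunE (grd _ _ _ (nz j isT)) -deg_f ffunE.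
Qed.

Lemma pairing_braidize_term deg rho (g : degseq gT n) (t : gpd gT n) X V :
  graded deg rho ->
  pairing (gpd_act (dual_rho rho) t (hproj (dual_deg deg) g X)) V
  = pairing X (gpd_act rho (adj_pair (g, t)).2 (hproj deg (adj_pair (g, t)).1 V)).
Proof.
move=> grd; rewrite -(pairing_eq (hproj_gpd_act _ _ _ (dual_graded grd)) (frefl V)).
rewrite pairing_hproj pairing_gpd_act pairing_hproj /=.
by apply: pairing_eq => // h; rewrite -(gpd_tgt_adj g t) hproj_gpd_act.
Qed.

End Pairing.

Unset Implicit Arguments. Set Strict Implicit.

Theorem corollary2p39
  (gT : finGroupType) (F : fieldType) (charF0 : [pchar F] =i pred0)
  (d : nat) (deg : 'I_d -> gT) (rho : gT -> 'M[F]_d)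
  (rho1 : rho 1%g = 1%:M)
  (rhoM : forall g h : gT, rho (g * h)%g = rho g *m rho h)
  (rho_graded : forall (g : gT) (k l : 'I_d),
      rho g l k != 0 -> deg l = (g * deg k * g^-1)%g)
  (n : nat) (X V : idx n d -> F) :
  pairing (braidize (dual_deg deg) (dual_rho rho) X) V
  = pairing X (braidize deg rho V).
Proof.
pose W k (x : degseq gT n * gpd gT n) :=
  (k%:R)^-1 * pairing X (gpd_act rho x.2 (hproj deg x.1 V)).
transitivity (\sum_(g : degseq gT n) \sum_(t in Aset g) W #|Aset g| (adj_pair (g, t))).
  rewrite /braidize pairing_suml; apply: eq_bigr => g _.
  rewrite pairing_scalel pairing_suml mulr_sumr; apply: eq_bigr => t _.
  by rewrite (pairing_braidize_term _ _ _ _ rho_graded).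
rewrite sum_Aset_adj_pair /braidize pairing_sumr; apply: eq_bigr => g _.
by rewrite pairing_scaler pairing_sumr mulr_sumr.
Qed.
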